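(* Let $(X_{1,\infty},f_{1,\infty},\mu_{1,\infty})$ be a metric nonautonomous dynamical system. For $\mathcal{P}_{1,\infty},\mathcal{Q}_{1,\infty}\in\mathcal{E}_{\max}$ let \[ d_R(\mathcal{P}_{1,\infty},\mathcal{Q}_{1,\infty})=\sup_{n\ge1}H_{\mu_n}(\mathcal{P}_n|\mathcal{Q}_n)+\sup_{n\ge1}H_{\mu_n}(\mathcal{Q}_n|\mathcal{P}_n). \] Then $d_R$ is a metric on $\mathcal{E}_{\max}$ and the function $\mathcal{P}_{1,\infty}\mapsto h(f_{1,\infty};\mathcal{P}_{1,\infty})$ is Lipschitz continuous with Lipschitz constant $1$ on $(\mathcal{E}_{\max},d_R)$.
   Context: A metric NDS consists of probability spaces $(X_n,\mathcal{A}_n,\mu_n)$ and measurable maps $f_n:X_n\to X_{n+1}$ with $f_n\mu_n=\mu_{n+1}$. $f_1^n=f_n\circ\cdots\circ f_1$, $f_1^{-n}$ = preimage under $f_1^n$. $H_\mu(\mathcal{P})=-\sum_P\mu(P)\log\mu(P)$; conditional entropy $H_\mu(\mathcal{P}|\mathcal{Q})=-\sum_{Q}\mu(Q)\sum_P\mu(P|Q)\log\mu(P|Q)$ with $\mu(P|Q)=\mu(P\cap Q)/\mu(Q)$. $h(f_{1,\infty};\mathcal{P}_{1,\infty})=\limsup_n\frac1nH_{\mu_1}(\bigvee_{i=0}^{n-1}f_1^{-i}\mathcal{P}_{i+1})$. $\mathcal{E}_{\max}$ is the class of all sequences $\{\mathcal{P}_n\}$ of finite measurable partitions of $X_n$ with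 $\sup_n\#\mathcal{P}_n<\infty$. *)

From HB Require Import structures.
From mathcomp Require Import all_boot all_order all_algebra.
From mathcomp Require Import all_classical all_reals all_analysis.
Set Implicit Arguments. Unset Strict Implicit. Unset Printing Implicit Defensive.
Import Order.TTheory GRing.Theory Num.Theory.
Local Open Scope classical_set_scope.
Local Open Scope ring_scope.

Section Entropy.
Variables (R : realType) (d : measure_display) (T : measurableType d).

Definition xlogx (x : R) : R := if x == 0 then 0 else x * ln x.

(* finite measurable partition (finiteness is imposed in Emax) *)
Definition is_meas_partition (P : set (set T)) : Prop :=
  (forall A, P A -> measurable A) /\
  (forall A B, P A -> P B -> A <> B -> A `&` B = set0) /\
  (forall x, exists A, P A /\ A x).

Variable mu : probability T R.

Definition entropy (P : set (set T)) : R :=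
  - \sum_(A \in P) xlogx (fine (mu A)).

Definition cond_prob (A B : set T) : R := fine (mu (A `&` B)) / fine (mu B).

Definition cond_entropy (P Q : set (set T)) : R :=
  - \sum_(B \in Q) (fine (mu B) * \sum_(A \in P) xlogx (cond_prob A B)).

Definition refines_mod0 (P Q : set (set T)) : Prop :=
  forall B, Q B -> exists A, P A /\ mu (B `\` A) = 0%E.

Definition equiv_mod0 (P Q : set (set T)) : Prop :=
  refines_mod0 P Q /\ refines_mod0 Q P.
End Entropy.

Definition pre_part (S T : Type) (g : S -> T) (P : set (set T)) : set (set S) :=
  [set g @^-1` A | A in P].

Definition join_part (T : Type) (P Q : set (set T)) : set (set T) :=
  [set C | exists A B, P A /\ Q B /\ C = A `&` B].

(* f_1^n : X_1 -> X_{n+1}  (0-indexed: fiter f n : X 0 -> X n) *)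
Fixpoint fiter (X : nat -> Type) (f : forall n, X n -> X n.+1) (n : nat)
  : X 0 -> X n :=
  match n return X 0 -> X n with
  | 0 => id
  | k.+1 => f k \o fiter f k
  end.

Fixpoint dyn_join (X : nat -> Type) (f : forall n, X n -> X n.+1)
  (P : forall n, set (set (X n))) (n : nat) : set (set (X 0)) :=
  match n with
  | 0 => [set setT]
  | k.+1 => join_part (dyn_join f P k) (pre_part (fiter f k) (P k))
  end.

Section NDS.
Variables (R : realType) (d : nat -> measure_display)
  (X : forall n, measurableType (d n)) (mu : forall n, probability (X n) R)
  (f : forall n, X n -> X n.+1).

Definition Emax (P : forall n, set (set (X n))) : Prop :=
  (forall n, is_meas_partition (P n)) /\
  exists N : nat, forall n, (P n #<= `I_N)%card.

Definition dR (P Q : forall n, set (set (X n))) : R :=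
  sup (range (fun n => cond_entropy (mu n) (P n) (Q n))) +
  sup (range (fun n => cond_entropy (mu n) (Q n) (P n))).

Definition nds_entropy (P : forall n, set (set (X n))) : \bar R :=
  limn_esup (fun n => ((n%:R)^-1 * entropy (mu 0) (dyn_join f P n))%:E).
End NDS.

(* Write H(P|Q) as the double sum over B in Q, A in P of x ln (y / x) with
   x = mu(A n B) and y = mu(B).  This summand is superadditive in (x, y) (the
   log-sum inequality), so refining the conditioning partition can only lower
   H(P|Q); with the chain rule H(P v Q|S) = H(Q|S) + H(P|Q v S) this yields the
   triangle inequality for H(.|.), hence for d_R, and H(P|Q) = 0 exactly when Q
   refines P modulo null sets.  For the entropy, subadditivity and invariance of
   H(.|.) under measure-preserving pullbacks give
   H(P^n) <= H(Q^n) + H(P^n|Q^n) <= H(Q^n) + n sup_k H(P_k|Q_k)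
   for the joins P^n, Q^n of the first n pulled-back partitions; dividing by n
   and taking the limsup gives h(P) <= h(Q) + sup_k H(P_k|Q_k), and the bound on
   the number of cells keeps h finite. *)

From HB Require Import structures.
From mathcomp Require Import all_boot all_order all_algebra.
From mathcomp Require Import all_classical all_reals all_analysis.
From mathcomp Require Import ring lra.
Import Order.TTheory GRing.Theory Num.Theory.
Local Open Scope classical_set_scope.
Local Open Scope ring_scope.

Set Implicit Arguments. Unset Strict Implicit. Unset Printing Implicit Defensive.

Section EntropyTerm.
Variable R : realType.
Implicit Types a b x y : R.

(* The summand of [cond_entropy]: a cell of mass [x] inside a conditioning
   cell of mass [y] contributes [x ln (y / x)]. *)
Definition ent_term x y : R := - (y * xlogx (x / y)).

Lemma xlogxE x : xlogx x = x * ln x.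
Proof. by rewrite /xlogx; case: eqP => [->|]; rewrite ?mul0r. Qed.

Lemma mul_lnB_le a b : 0 < a -> 0 < b -> a * (ln b - ln a) <= b - a.
Proof.
move=> a0 b0; have ba0 := divr_gt0 b0 a0.
have lnba : ln b - ln a <= b / a - 1.
  rewrite -ln_div ?posrE //.
  by have := @le_ln1Dx R (b / a - 1); rewrite (addrC 1) subrK; apply; lra.
apply: le_trans (ler_wpM2l (ltW a0) lnba) _.
by rewrite mulrBr mulr1 mulrCA divff ?gt_eqF // mulr1.
Qed.

Lemma ent_termE x y : 0 <= x <= y -> ent_term x y = x * (ln y - ln x).
Proof.
case/andP=> x0 xy; rewrite /ent_term xlogxE.
have [->|xn0] := eqVneq x 0; first by rewrite !(mul0r, mulr0, oppr0).
have xp : 0 < x by rewrite lt_def xn0.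
have yp : 0 < y := lt_le_trans xp xy.
by rewrite ln_div ?posrE // mulrA mulrCA divff ?gt_eqF // mulr1 -mulrN opprB.
Qed.

Lemma ent_term0 y : ent_term 0 y = 0.
Proof. by rewrite /ent_term mul0r xlogxE mul0r mulr0 oppr0. Qed.

Lemma ent_term_ge0 x y : 0 <= x <= y -> 0 <= ent_term x y.
Proof.
move=> /[dup] /ent_termE -> /andP[x0 xy].
have [->|xn0] := eqVneq x 0; first by rewrite mul0r.
have xp : 0 < x by rewrite lt_def xn0.
by rewrite mulr_ge0 // subr_ge0 ler_ln ?posrE // (lt_le_trans xp xy).
Qed.

Lemma ent_term_le x y : 0 <= x <= y -> ent_term x y <= y.
Proof.
move=> /[dup] /ent_termE -> /andP[x0 xy].
have [x_0|xn0] := eqVneq x 0; first by rewrite x_0 mul0r -x_0.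
have xp : 0 < x by rewrite lt_def xn0.
by apply: le_trans (mul_lnB_le xp (lt_le_trans xp xy)) _; rewrite gerBl.
Qed.

Lemma ent_term_eq0 x y : 0 < x -> x <= y -> ent_term x y = 0 -> x = y.
Proof.
move=> xp xy; rewrite ent_termE ?(ltW xp) ?xy // => /eqP.
rewrite mulf_eq0 gt_eqF //= subr_eq0 => /eqP e; apply/eqP; rewrite eq_le xy /=.
by rewrite -ler_ln ?posrE ?e // (lt_le_trans xp xy).
Qed.

Lemma ent_term_homo x y y' : 0 <= x <= y -> y <= y' -> ent_term x y <= ent_term x y'.
Proof.
move=> /[dup] xy0 /andP[x0 xy] yy'.
have xy'0 : 0 <= x <= y' by rewrite x0 (le_trans xy yy').
rewrite !ent_termE //; have [->|xn0] := eqVneq x 0; first by rewrite !mul0r.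
have xp : 0 < x by rewrite lt_def xn0.
have yp : 0 < y := lt_le_trans xp xy.
by rewrite ler_wpM2l // lerD2r ler_ln ?posrE // (lt_le_trans yp yy').
Qed.

Lemma ent_termD_le x1 y1 x2 y2 : 0 <= x1 <= y1 -> 0 <= x2 <= y2 ->
  ent_term x1 y1 + ent_term x2 y2 <= ent_term (x1 + x2) (y1 + y2).
Proof.
move=> /[dup] h1 /andP[x10 x1y1] /[dup] h2 /andP[x20 x2y2].
have [->|n1] := eqVneq x1 0.
  by rewrite ent_term0 !add0r (ent_term_homo h2) // lerDr (le_trans x10 x1y1).
have [->|n2] := eqVneq x2 0.
  by rewrite ent_term0 !addr0 (ent_term_homo h1) // lerDl (le_trans x20 x2y2).
have p1 : 0 < x1 by rewrite lt_def n1.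
have p2 : 0 < x2 by rewrite lt_def n2.
have q1 : 0 < y1 := lt_le_trans p1 x1y1.
have q2 : 0 < y2 := lt_le_trans p2 x2y2.
set X := x1 + x2; set Y := y1 + y2.
have Xp : 0 < X by rewrite addr_gt0.
have Yp : 0 < Y by rewrite addr_gt0.
have hXY : 0 <= X <= Y by rewrite ltW //= lerD.
(* compare each cell with the rescaled mass [y_i X / Y] *)
have k1 := mul_lnB_le p1 (divr_gt0 (mulr_gt0 q1 Xp) Yp).
have k2 := mul_lnB_le p2 (divr_gt0 (mulr_gt0 q2 Xp) Yp).
rewrite !ln_div ?posrE ?mulr_gt0 // !lnM ?posrE // in k1 k2.
have sum0 : y1 * X / Y - x1 + (y2 * X / Y - x2) = 0.
  by rewrite addrACA -opprD -mulrDl -mulrDl mulrAC divff ?gt_eqF // mul1r subrr.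
by rewrite !ent_termE //; move: (lerD k1 k2); rewrite sum0 /X; lra.
Qed.

Lemma ent_term_sum (I : eqType) (s : seq I) (x y : I -> R) :
  (forall i, i \in s -> 0 <= x i <= y i) ->
  \sum_(i <- s) ent_term (x i) (y i) <=
  ent_term (\sum_(i <- s) x i) (\sum_(i <- s) y i).
Proof.
elim: s => [|a s IH] h; first by rewrite !big_nil ent_term0.
have hs i : i \in s -> 0 <= x i <= y i by move=> iis; apply: h; rewrite inE iis orbT.
have hS : 0 <= \sum_(i <- s) x i <= \sum_(i <- s) y i.
  rewrite big_seq sumr_ge0 /=; last by move=> i /hs /andP[].
  by rewrite [leRHS]big_seq ler_sum // => i /hs /andP[].
rewrite !big_cons; apply: le_trans (ent_termD_le _ hS); last by apply: h; rewrite inE eqxx.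
by rewrite lerD2l IH.
Qed.

End EntropyTerm.

Section FiniteSums.
Variable R : realType.
Variables (I : choiceType) (D : set I).
Hypothesis finD : finite_set D.

Lemma ler_fsum (F G : I -> R) :
  (forall i, D i -> F i <= G i) -> \sum_(i \in D) F i <= \sum_(i \in D) G i.
Proof.
move=> h; rewrite !fsbig_finite // big_seq [leRHS]big_seq.
by apply: ler_sum => i; rewrite in_fset_set // => /set_mem /h.
Qed.

Lemma fsumrN (F : I -> R) : \sum_(i \in D) - F i = - \sum_(i \in D) F i.
Proof. by rewrite !fsbig_finite // sumrN. Qed.

Lemma fsumrB (F G : I -> R) :
  \sum_(i \in D) (F i - G i) = \sum_(i \in D) F i - \sum_(i \in D) G i.
Proof. by rewrite !fsbig_finite // sumrB. Qed.

Lemma ent_term_fsum (x y : I -> R) : (forall i, D i -> 0 <= x i <= y i) ->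
  \sum_(i \in D) ent_term (x i) (y i) <=
  ent_term (\sum_(i \in D) x i) (\sum_(i \in D) y i).
Proof.
move=> h; rewrite !fsbig_finite //; apply: ent_term_sum => i.
by rewrite in_fset_set // => /set_mem /h.
Qed.

End FiniteSums.

Lemma fsbig_image_nonempty (R : realType) (T : Type) (I : choiceType) (D : set I)
    (h : I -> set T) (F : set T -> R) :
  F set0 = 0 -> {in [set i | D i /\ h i !=set0] &, injective h} ->
  \sum_(C \in h @` D) F C = \sum_(i \in D) F (h i).
Proof.
move=> F0 hinj; pose D' := [set i | D i /\ h i !=set0].
have F0h i : D i -> ~ D' i -> F (h i) = 0.
  move=> Di /not_andP[//|/set0P/negP]; rewrite negbK => /eqP ->; exact: F0.
rewrite -(fsbig_widen (h @` D') (h @` D) F).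
- rewrite fsbig_image //; apply: fsbig_widen => [i [] //|i [Di nD'i]].
  exact: F0h.
- by move=> _ [i [Di _] <-]; exists i.
- move=> _ [[i Di <-] nD'] /=.
  by apply: F0h => // D'i; apply: nD'; exists i.
Qed.

Lemma join_partC (T : Type) (P Q : set (set T)) : join_part P Q = join_part Q P.
Proof.
by apply/seteqP; split => C [A [B [PA [QB ->]]]]; exists B, A; rewrite setIC.
Qed.

Lemma join_partA (T : Type) (P Q S : set (set T)) :
  join_part (join_part P Q) S = join_part P (join_part Q S).
Proof.
apply/seteqP; split => C.
  move=> [_ [D [[A [B [PA [QB ->]]]] [SD ->]]]].
  by exists A, (B `&` D); split => //; split; [exists B, D|rewrite setIA].
move=> [A [_ [PA [[B [D [QB [SD ->]]]] ->]]]].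
by exists (A `&` B), D; split; [exists A, B|rewrite setIA].
Qed.

Lemma join_partE (T : Type) (P Q : set (set T)) :
  join_part P Q = (fun p => p.1 `&` p.2) @` (P `*` Q).
Proof.
apply/seteqP; split => [C [A [B [PA [QB ->]]]]|_ [[A B] [PA QB] <-]].
  by exists (A, B).
by exists A, B.
Qed.

Section Partitions.
Variables (d : measure_display) (T : measurableType d).
Implicit Types P Q S : set (set T).

Definition fin_partition P := is_meas_partition P /\ finite_set P.

Lemma partition_cell_eq P A B x : is_meas_partition P -> P A -> P B ->
  A x -> B x -> A = B.
Proof.
case=> _ [Pd _] PA PB Ax Bx; apply: contrapT => AB.
by have /seteqP[/(_ x (conj Ax Bx))] := Pd A B PA PB AB.
Qed.

Lemma fin_partition_meas P A : fin_partition P -> P A -> measurable A.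
Proof. by case=> [[Pm _] _]; exact: Pm. Qed.

Lemma join_fin_partition P Q :
  fin_partition P -> fin_partition Q -> fin_partition (join_part P Q).
Proof.
move=> [/[dup] hP [Pm [Pd Pc]] fP] [/[dup] hQ [Qm [Qd Qc]] fQ]; split; last first.
  by rewrite join_partE; apply/finite_image/finite_setX.
split; [|split].
- by move=> _ [A [B [PA [QB ->]]]]; apply: measurableI; [exact: Pm|exact: Qm].
- move=> _ _ [A [B [PA [QB ->]]]] [A' [B' [PA' [QB' ->]]]] ne.
  apply/seteqP; split => [x [[Ax Bx] [A'x B'x]]|//]; apply: ne.
  by rewrite (partition_cell_eq hP PA PA' Ax A'x) (partition_cell_eq hQ QB QB' Bx B'x).
- move=> x; have [A [PA Ax]] := Pc x; have [B [QB Bx]] := Qc x.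
  by exists (A `&` B); split => //; exists A, B.
Qed.

Lemma trivial_fin_partition : fin_partition [set setT].
Proof.
split; last exact: finite_set1.
by split; [move=> A ->|split; [move=> A B -> ->|move=> x; exists setT]].
Qed.

Lemma fsbig_join_part (R : realType) P Q (F : set T -> R) :
  fin_partition P -> fin_partition Q -> F set0 = 0 ->
  \sum_(C \in join_part P Q) F C = \sum_(A \in P) \sum_(B \in Q) F (A `&` B).
Proof.
move=> [hP fP] [hQ fQ] F0; rewrite join_partE fsbig_image_nonempty // ?pair_fsbig //.
move=> [A B] [A' B'] /set_mem [[/= PA QB] [x [Ax Bx]]] /set_mem [[/= PA' QB'] _] /= e.
have [A'x B'x] : (A' `&` B') x by rewrite -e.
by rewrite (partition_cell_eq hP PA PA' Ax A'x) (partition_cell_eq hQ QB QB' Bx B'x).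
Qed.

Variables (R : realType) (mu : probability T R).
Local Notation m A := (fine (mu A)).
Local Notation H := (entropy mu).
Local Notation CE := (cond_entropy mu).

Lemma fine_measure_ge0 A : 0 <= m A.
Proof. exact/fine_ge0/measure_ge0. Qed.

Lemma le_fine_measure A B : measurable A -> measurable B -> A `<=` B -> m A <= m B.
Proof.
move=> mA mB AB; rewrite fine_le ?fin_num_measure //.
by rewrite le_measure ?inE.
Qed.

Lemma fine_measureI_le A B : measurable A -> measurable B ->
  0 <= m (A `&` B) <= m B.
Proof.
move=> mA mB; rewrite fine_measure_ge0 le_fine_measure //; exact: measurableI.
Qed.

Lemma fine_measureDI A B : measurable A -> measurable B ->
  m A = m (A `\` B) + m (A `&` B).
Proof.
move=> mA mB; rewrite (measureDI mu mA mB) fineD // fin_num_measure //.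
  exact: measurableD.
exact: measurableI.
Qed.

Lemma fsum_partition_setI P B : fin_partition P -> measurable B ->
  \sum_(A \in P) m (A `&` B) = m B.
Proof.
move=> [/[dup] hP [Pm [_ Pc]] fP] mB.
have mPB A : P A -> measurable (A `&` B) by move=> PA; apply: measurableI => //; exact: Pm.
have eB : B = \bigcup_(A in P) (A `&` B).
  apply/seteqP; split => [x Bx|x [A _ [_ Bx]]] //.
  by have [A [PA Ax]] := Pc x; exists A.
have tr : trivIset P (fun A => A `&` B).
  by move=> A A' PA PA' [x [[Ax _] [A'x _]]]; exact: (partition_cell_eq hP PA PA' Ax A'x).
rewrite [in RHS]eB (measure_fin_bigcup mu fP tr mPB) !fsbig_finite //.
rewrite big_seq sum_fine; first by rewrite -big_seq.
by move=> A; rewrite in_fset_set // => /set_mem /mPB /fin_num_measure.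
Qed.

Lemma fsum_partition P : fin_partition P -> \sum_(A \in P) m A = 1.
Proof.
move=> hP; have := fsum_partition_setI hP measurableT; rewrite probability_setT /= => <-.
by apply: eq_fsbigr => A _; rewrite setIT.
Qed.

Lemma cond_entropyE P Q : finite_set P -> finite_set Q ->
  CE P Q = \sum_(B \in Q) \sum_(A \in P) ent_term (m (A `&` B)) (m B).
Proof.
move=> fP fQ; rewrite /cond_entropy -fsumrN //; apply: eq_fsbigr => B _.
by rewrite mulr_fsumr -fsumrN.
Qed.

Lemma entropyE_cond P : H P = CE P [set setT].
Proof.
rewrite /cond_entropy fsbig_set1 /entropy probability_setT mul1r; congr (- _).
by apply: eq_fsbigr => A _; rewrite /cond_prob setIT probability_setT divr1.
Qed.

Lemma cond_entropy_join P Q : fin_partition P -> fin_partition Q ->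
  CE P Q = H (join_part P Q) - H Q.
Proof.
move=> /[dup] hP [[Pm _] fP] /[dup] hQ [[Qm _] fQ].
rewrite cond_entropyE // /entropy fsbig_join_part ?measure0 ?xlogxE ?mul0r //.
rewrite [in RHS]exchange_fsbig // opprK addrC -fsumrB //.
apply: eq_fsbigr => B /set_mem QB; have mB := Qm _ QB.
transitivity (\sum_(A \in P) (m (A `&` B) * ln (m B) - xlogx (m (A `&` B)))).
  apply: eq_fsbigr => A /set_mem PA.
  by rewrite ent_termE ?fine_measureI_le ?xlogxE //; [ring|exact: Pm].
by rewrite fsumrB // -mulr_fsuml fsum_partition_setI // xlogxE.
Qed.

Lemma cond_entropy_ge0 P Q : fin_partition P -> fin_partition Q -> 0 <= CE P Q.
Proof.
move=> hP hQ; rewrite cond_entropyE; [|exact: hP.2|exact: hQ.2].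
apply: fsumr_ge0 => B QB; apply: fsumr_ge0 => A PA; apply: ent_term_ge0.
by apply: fine_measureI_le; [apply: (fin_partition_meas hP)|apply: (fin_partition_meas hQ)].
Qed.

Lemma entropy_trivial : H [set setT] = 0.
Proof. by rewrite /entropy fsbig_set1 probability_setT /= xlogxE ln1 mulr0 oppr0. Qed.

Lemma entropy_ge0 P : fin_partition P -> 0 <= H P.
Proof.
by move=> hP; rewrite entropyE_cond; apply: cond_entropy_ge0 hP trivial_fin_partition.
Qed.

Lemma entropy_le_join P Q : fin_partition P -> fin_partition Q -> H P <= H (join_part P Q).
Proof.
move=> hP hQ; have := cond_entropy_ge0 hQ hP.
by rewrite cond_entropy_join // join_partC subr_ge0.
Qed.

(* Refining the conditioning partition merges the summands of each cell [B]
   of [Q] into a single one, by the log-sum inequality. *)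
Lemma cond_entropy_joinr_le P Q S :
  fin_partition P -> fin_partition Q -> fin_partition S ->
  CE P (join_part Q S) <= CE P Q.
Proof.
move=> hP hQ hS; have [[_ fP] [_ fQ]] := (hP, hQ); have [_ fS] := hS.
have fQS := (join_fin_partition hQ hS).2.
rewrite !cond_entropyE // fsbig_join_part //; last first.
  by apply: fsbig1 => A _; rewrite setI0 measure0 ent_term0.
apply: ler_fsum => // B QB; rewrite exchange_fsbig //; apply: ler_fsum => // A PA.
have mA := fin_partition_meas hP PA; have mB := fin_partition_meas hQ QB.
have mS D : S D -> measurable D by exact: fin_partition_meas.
apply: le_trans (ent_term_fsum fS _) _.
  by move=> D SD; rewrite fine_measureI_le //; apply: measurableI => //; exact: mS.
have -> : \sum_(D \in S) m (A `&` (B `&` D)) = m (A `&` B).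
  rewrite -(fsum_partition_setI hS (measurableI _ _ mA mB)).
  by apply: eq_fsbigr => D _; rewrite setIA setIC.
suff -> : \sum_(D \in S) m (B `&` D) = m B by [].
by rewrite -(fsum_partition_setI hS mB); apply: eq_fsbigr => D _; rewrite setIC.
Qed.

Lemma cond_entropy_joinl_le P Q S :
  fin_partition P -> fin_partition Q -> fin_partition S ->
  CE P (join_part Q S) <= CE P S.
Proof. by move=> hP hQ hS; rewrite join_partC cond_entropy_joinr_le. Qed.

Lemma cond_entropy_chain P Q S :
  fin_partition P -> fin_partition Q -> fin_partition S ->
  CE (join_part P Q) S = CE Q S + CE P (join_part Q S).
Proof.
move=> hP hQ hS; have hPQ := join_fin_partition hP hQ.
have hQS := join_fin_partition hQ hS.
by rewrite !cond_entropy_join // join_partA; ring.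
Qed.

Lemma cond_entropy_triangle P Q S :
  fin_partition P -> fin_partition Q -> fin_partition S ->
  CE P S <= CE P Q + CE Q S.
Proof.
move=> hP hQ hS; apply: (@le_trans _ _ (CE (join_part P Q) S)).
  rewrite join_partC cond_entropy_chain // lerDl.
  exact/cond_entropy_ge0/join_fin_partition.
by rewrite cond_entropy_chain // addrC lerD2r cond_entropy_joinr_le.
Qed.

Lemma cond_entropy_join_subadd P1 P2 Q :
  fin_partition P1 -> fin_partition P2 -> fin_partition Q ->
  CE (join_part P1 P2) Q <= CE P1 Q + CE P2 Q.
Proof.
by move=> h1 h2 hQ; rewrite cond_entropy_chain // addrC lerD2r cond_entropy_joinl_le.
Qed.

Lemma cond_entropy_le_card P Q N : fin_partition P -> fin_partition Q ->
  (P #<= `I_N)%card -> CE P Q <= N%:R.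
Proof.
move=> hP hQ PN; have [[_ fP] [_ fQ]] := (hP, hQ); rewrite cond_entropyE //.
apply: (@le_trans _ _ (\sum_(B \in Q) m B * N%:R)); last first.
  by rewrite -mulr_fsuml fsum_partition // mul1r.
apply: ler_fsum => // B QB; have mB := fin_partition_meas hQ QB.
apply: (@le_trans _ _ (\sum_(A \in P) m B)).
  apply: ler_fsum => // A PA; apply: ent_term_le.
  exact: fine_measureI_le (fin_partition_meas hP PA) mB.
rewrite fsbig_finite // big_const_seq count_predT iter_addr_0 mulr_natr.
by apply: ler_wpMn2l; rewrite ?fine_measure_ge0 // geq_card_fset_set.
Qed.

Lemma fine_measure_eq0 A : measurable A -> m A = 0 -> mu A = 0%E.
Proof. by move=> mA mA0; rewrite -[LHS]fineK ?fin_num_measure // mA0. Qed.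

Lemma refines_mod0_cond_entropy P Q : fin_partition P -> fin_partition Q ->
  refines_mod0 mu P Q -> CE P Q = 0.
Proof.
move=> [[Pm [Pd _]] fP] /[dup] hQ [_ fQ] ref; rewrite cond_entropyE //.
apply: fsbig1 => B QB; have [A0 [PA0 BA0]] := ref B QB.
have mB := fin_partition_meas hQ QB; have mA0 := Pm _ PA0.
have mBA0 : m (B `\` A0) = 0 by rewrite BA0.
apply: fsbig1 => A PA; have mA := Pm _ PA.
have [->|nA] := pselect (A = A0).
  rewrite setIC [in m B](fine_measureDI mB mA0) mBA0 add0r.
  by rewrite ent_termE ?subrr ?mulr0 // fine_measure_ge0 lexx.
suff -> : m (A `&` B) = 0 by rewrite ent_term0.
apply/eqP; rewrite eq_le fine_measure_ge0 andbT -mBA0.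
apply: le_fine_measure; [exact: measurableI|exact: measurableD|].
move=> x [Ax Bx]; split => // A0x.
by have /seteqP[/(_ x (conj Ax A0x))] := Pd _ _ PA PA0 nA.
Qed.

Lemma cond_entropy0_refines_mod0 P Q : fin_partition P -> fin_partition Q ->
  CE P Q = 0 -> refines_mod0 mu P Q.
Proof.
move=> /[dup] hP [[Pm _] fP] /[dup] hQ [_ fQ] CE0 B QB.
have mB := fin_partition_meas hQ QB.
have termsB A : P A -> ent_term (m (A `&` B)) (m B) = 0.
  have ge0 B' A' : Q B' -> P A' -> 0 <= ent_term (m (A' `&` B')) (m B').
    move=> QB' PA'; apply: ent_term_ge0.
    exact: fine_measureI_le (Pm _ PA') (fin_partition_meas hQ QB').
  move: CE0; rewrite cond_entropyE // => CE0.
  have sumB0 := pfsumr_eq0 fQ (fun B' QB' => fsumr_ge0 (ge0 B' ^~ QB')) CE0 QB.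
  by move: (pfsumr_eq0 fP (ge0 B ^~ QB) sumB0) => /(_ A).
have null_diff A : P A -> m (B `\` A) = 0 -> exists A, P A /\ mu (B `\` A) = 0%E.
  move=> PA BA0; exists A; split => //.
  exact: fine_measure_eq0 (measurableD mB (Pm _ PA)) BA0.
have [mB0|mBn0] := eqVneq (m B) 0.
  have [A PA _] : exists2 A, P A & 0 < m A.
    by apply: (@fsumr_gt0 R _ [::]); rewrite fsum_partition.
  apply: (null_diff A PA); apply/eqP; rewrite eq_le fine_measure_ge0 andbT -mB0.
  by apply: le_fine_measure (measurableD mB (Pm _ PA)) mB _ => x [].
have : 0 < \sum_(A \in P) m (A `&` B).
  by rewrite fsum_partition_setI // lt_def mBn0 fine_measure_ge0.
move=> /(@fsumr_gt0 R _ [::])[A PA ABp]; apply: (null_diff A PA).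
have e : m (A `&` B) = m B.
  apply: ent_term_eq0 ABp _ (termsB A PA).
  by case/andP: (fine_measureI_le (Pm _ PA) mB).
by have := fine_measureDI mB (Pm _ PA); rewrite setIC e; lra.
Qed.

Lemma cond_entropy_eq0 P Q : fin_partition P -> fin_partition Q ->
  CE P Q = 0 <-> refines_mod0 mu P Q.
Proof.
by move=> hP hQ; split; [exact: cond_entropy0_refines_mod0|exact: refines_mod0_cond_entropy].
Qed.
End Partitions.

Section Pullback.
Variables (R : realType) (d1 d2 : measure_display) (T1 : measurableType d1)
  (T2 : measurableType d2) (mu1 : probability T1 R) (mu2 : probability T2 R)
  (g : T1 -> T2) (mg : measurable_fun setT g)
  (g_pres : forall A, measurable A -> mu1 (g @^-1` A) = mu2 A).

Lemma pre_fin_partition (P : set (set T2)) :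
  fin_partition P -> fin_partition (pre_part g P).
Proof.
move=> [[Pm [Pd Pc]] fP]; split; last exact: finite_image.
split; [|split].
- by move=> _ [A PA <-]; have := mg measurableT (Pm _ PA); rewrite setTI.
- move=> _ _ [A PA <-] [A' PA' <-] ne.
  have nA : A <> A' by move=> e; apply: ne; rewrite e.
  by rewrite -preimage_setI (Pd _ _ PA PA' nA) preimage_set0.
- move=> x; have [A [PA Ax]] := Pc (g x).
  by exists (g @^-1` A); split => //; exists A.
Qed.

Lemma cond_entropy_pre (P Q : set (set T2)) : fin_partition P -> fin_partition Q ->
  cond_entropy mu1 (pre_part g P) (pre_part g Q) = cond_entropy mu2 P Q.
Proof.
move=> /[dup] hP [[Pm _] fP] /[dup] hQ [[Qm _] fQ].
have pre_inj D : fin_partition D -> {in [set A | D A /\ g @^-1` A !=set0] &,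
    injective (preimage g)}.
  move=> [hD _] i j /set_mem [Di [x xi]] /set_mem [Dj _] e.
  by apply: (partition_cell_eq hD Di Dj xi); have : (g @^-1` j) x by rewrite -e.
rewrite !cond_entropyE //; try exact: finite_image.
rewrite /pre_part (fsbig_image_nonempty _ (pre_inj Q hQ)); last first.
  by apply: fsbig1 => A _; rewrite setI0 measure0 ent_term0.
apply: eq_fsbigr => B /set_mem QB.
rewrite (fsbig_image_nonempty _ (pre_inj P hP)); last by rewrite set0I measure0 ent_term0.
apply: eq_fsbigr => A /set_mem PA.
by rewrite -preimage_setI !g_pres //; [exact: Qm|apply: measurableI; [exact: Pm|exact: Qm]].
Qed.

End Pullback.

Section LimSup.
Variable R : realType.
Local Open Scope ereal_scope.
Implicit Types u v : (\bar R)^nat.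

Lemma le_limn_esup u v : (forall n, u n <= v n) -> limn_esup u <= limn_esup v.
Proof.
move=> uv; rewrite /limn_esup !limf_esupE; apply: le_ereal_inf_tmp.
move=> _ [V FV <-]; apply: (@le_trans _ _ (ereal_sup (u @` V))).
  by apply: ereal_inf_lbound; exists V.
apply: ge_ereal_sup => _ [n Vn <-]; apply: le_trans (uv n) _.
by apply: ereal_sup_ubound; exists n.
Qed.

Lemma limn_esup_cst (K : \bar R) : limn_esup (fun=> K) = K.
Proof. by have [] := cvg_limn_einf_sup (cvg_cst K). Qed.

Lemma limn_esup_shift (c : R) u :
  limn_esup (fun n => c%:E + u n) = c%:E + limn_esup u.
Proof.
rewrite -[LHS]oppeK -limn_einfN -[limn_esup u]oppeK -limn_einfN.
have -> : -%E \o (fun n => c%:E + u n) = (fun n => (- c)%:E + (-%E \o u) n).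
  by apply/funext => n /=; rewrite oppeD.
by rewrite limn_einf_shift // oppeD // EFinN oppeK.
Qed.

End LimSup.

Section BoundedSup.
Variable R : realType.
Implicit Types u : nat -> R.

Lemma le_sup_range u K : (forall n, u n <= K) -> forall n, u n <= sup (range u).
Proof. by move=> uK n; apply: ub_le_sup; [exists K => _ [k _ <-]|exists n]. Qed.

Lemma sup_range_le u c : (forall n, u n <= c) -> sup (range u) <= c.
Proof. by move=> uc; apply: ge_sup; [exists (u 0), 0|move=> _ [k _ <-]]. Qed.

Lemma sup_range_eq0 u K : (forall n, 0 <= u n) -> (forall n, u n <= K) ->
  sup (range u) = 0 <-> forall n, u n = 0.
Proof.
move=> u0 uK; split => [s0 n|u_0].
  by apply/eqP; rewrite eq_le u0 andbT -s0 (le_sup_range uK).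
apply/eqP; rewrite eq_le (le_trans (u0 0) (le_sup_range uK 0)) andbT.
by apply: sup_range_le => n; rewrite u_0.
Qed.

End BoundedSup.

Section NonautonomousSystem.
(* With non-strict implicit arguments the index [n] of [f] and of the
   partition sequences would become implicit. *)
Local Unset Implicit Arguments.
Variables (R : realType) (d : nat -> measure_display)
  (X : forall n, measurableType (d n)) (mu : forall n, probability (X n) R)
  (f : forall n, X n -> X n.+1).
Local Set Implicit Arguments. Local Set Strict Implicit.
Hypothesis mf : forall n, measurable_fun setT (f n).
Hypothesis push : forall n (A : set (X n.+1)), measurable A ->
  mu n.+1 A = mu n (f n @^-1` A).
Implicit Types P Q S : forall n, set (set (X n)).

Lemma measurable_fiter n : measurable_fun setT (fiter f n).
Proof.
elim: n => [|n IH] /=; first exact: measurable_id.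
apply: measurableT_comp; [exact: mf|exact: IH].
Qed.

Lemma fiter_preimage_measure n (A : set (X n)) : measurable A ->
  mu 0 (fiter f n @^-1` A) = mu n A.
Proof.
elim: n A => [//|n IH] A mA /=.
by rewrite push // -IH // -[_ @^-1` _]setTI; apply: mf.
Qed.

Lemma dyn_join_fin_partition P : (forall n, fin_partition (P n)) ->
  forall n, fin_partition (dyn_join f P n).
Proof.
move=> hP; elim=> [|n IH] /=; first exact: trivial_fin_partition.
exact: join_fin_partition IH (pre_fin_partition (measurable_fiter n) (hP n)).
Qed.

Lemma dyn_join_trivial n :
  dyn_join f (fun n => [set setT : set (X n)]) n = [set setT].
Proof.
elim: n => [//|n IH] /=; rewrite IH.
apply/seteqP; split => [C [A [B [-> [[A' -> <-] ->]]]]|C ->] /=.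
  by rewrite preimage_setT setIT.
by exists setT, setT; split => //; split; [exists setT|rewrite setIT].
Qed.

Section Comparison.
Variables (P Q : forall n, set (set (X n))) (c : R).
Hypotheses (hP : forall n, fin_partition (P n)) (hQ : forall n, fin_partition (Q n)).
Hypothesis CE_le : forall n, cond_entropy (mu n) (P n) (Q n) <= c.

Lemma cond_entropy_dyn_join_le n :
  cond_entropy (mu 0) (dyn_join f P n) (dyn_join f Q n) <= n%:R * c.
Proof.
elim: n => [|n IH] /=.
  by rewrite -entropyE_cond entropy_trivial mul0r.
have [hPn hQn] := (dyn_join_fin_partition P hP n, dyn_join_fin_partition Q hQ n).
have hPn' := pre_fin_partition (measurable_fiter n) (hP n).
have hQn' := pre_fin_partition (measurable_fiter n) (hQ n).
apply: le_trans (cond_entropy_join_subadd _ _ _ _) _ => //; first exact: join_fin_partition.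
rewrite -addn1 natrD mulrDl mul1r lerD //.
  exact: le_trans (cond_entropy_joinr_le _ _ _ _) IH.
apply: le_trans (cond_entropy_joinl_le _ _ _ _) _ => //.
by rewrite (cond_entropy_pre (fiter_preimage_measure n)).
Qed.

Lemma entropy_dyn_join_le n : entropy (mu 0) (dyn_join f P n) <=
  entropy (mu 0) (dyn_join f Q n) + n%:R * c.
Proof.
have [hPn hQn] := (dyn_join_fin_partition P hP n, dyn_join_fin_partition Q hQ n).
apply: le_trans (entropy_le_join _ hPn hQn) _.
have := cond_entropy_dyn_join_le n; rewrite cond_entropy_join // join_partC.
by rewrite lerBlDl.
Qed.

End Comparison.

Lemma nds_entropy_le_shift P Q (c : R) :
  (forall n, fin_partition (P n)) -> (forall n, fin_partition (Q n)) ->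
  0 <= c -> (forall n, cond_entropy (mu n) (P n) (Q n) <= c) ->
  (nds_entropy mu f P <= c%:E + nds_entropy mu f Q)%E.
Proof.
move=> hP hQ c0 CE_le; rewrite /nds_entropy -limn_esup_shift.
apply: le_limn_esup => -[|n]; rewrite -EFinD lee_fin.
  by rewrite invr0 !mul0r addr0.
apply: le_trans (ler_wpM2l _ (entropy_dyn_join_le P Q c hP hQ CE_le n.+1)) _.
  by rewrite invr_ge0.
by rewrite mulrDr mulrA mulVf ?pnatr_eq0 // mul1r addrC.
Qed.

Lemma nds_entropy_trivial : nds_entropy mu f (fun n => [set setT]) = 0%E.
Proof.
rewrite /nds_entropy -[RHS](limn_esup_cst (0 : \bar R)); congr limn_esup.
by apply/funext => n; rewrite dyn_join_trivial entropy_trivial mulr0.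
Qed.

Lemma nds_entropy_ge0 P :
  (forall n, fin_partition (P n)) -> (0 <= nds_entropy mu f P)%E.
Proof.
move=> hP; rewrite -(limn_esup_cst (0 : \bar R)); apply: le_limn_esup => n.
by rewrite lee_fin mulr_ge0 ?invr_ge0 // (entropy_ge0 _ (dyn_join_fin_partition P hP n)).
Qed.

Definition sup_cond_entropy P Q : R :=
  sup (range (fun n => cond_entropy (mu n) (P n) (Q n))).

Lemma dRE P Q : dR mu P Q = sup_cond_entropy P Q + sup_cond_entropy Q P.
Proof. by []. Qed.

Lemma Emax_fin_partition P : Emax P -> forall n, fin_partition (P n).
Proof.
by move=> [hP [N PN]] n; split; [exact: hP|exact: card_le_finite (PN n) (finite_II N)].
Qed.

Section TwoPartitions.
Variables P Q : forall n, set (set (X n)).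
Hypotheses (hP : Emax P) (hQ : Emax Q).

Lemma cond_entropy_bounded :
  exists K, forall n, cond_entropy (mu n) (P n) (Q n) <= K.
Proof.
have [_ [N PN]] := hP; exists N%:R => n.
exact: cond_entropy_le_card (Emax_fin_partition hP n) (Emax_fin_partition hQ n) (PN n).
Qed.

Lemma cond_entropy_le_sup n :
  cond_entropy (mu n) (P n) (Q n) <= sup_cond_entropy P Q.
Proof. by have [K /le_sup_range] := cond_entropy_bounded. Qed.

Lemma sup_cond_entropy_ge0 : 0 <= sup_cond_entropy P Q.
Proof.
apply: le_trans (cond_entropy_le_sup 0).
exact: cond_entropy_ge0 (Emax_fin_partition hP 0) (Emax_fin_partition hQ 0).
Qed.

Lemma sup_cond_entropy_eq0 :
  sup_cond_entropy P Q = 0 <-> forall n, refines_mod0 (mu n) (P n) (Q n).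
Proof.
have [K CE_le] := cond_entropy_bounded.
have [hPn hQn] := (Emax_fin_partition hP, Emax_fin_partition hQ).
have CE_ge0 n := cond_entropy_ge0 (mu n) (hPn n) (hQn n).
rewrite /sup_cond_entropy (sup_range_eq0 CE_ge0 CE_le).
by split => h n; apply/(cond_entropy_eq0 (mu n) (hPn n) (hQn n)).
Qed.

End TwoPartitions.

Lemma sup_cond_entropy_triangle P Q S : Emax P -> Emax Q -> Emax S ->
  sup_cond_entropy P S <= sup_cond_entropy P Q + sup_cond_entropy Q S.
Proof.
move=> hP hQ hS; apply: sup_range_le => n.
apply: le_trans (cond_entropy_triangle (mu n) (Emax_fin_partition hP n)
  (Emax_fin_partition hQ n) (Emax_fin_partition hS n)) _.
by rewrite lerD // cond_entropy_le_sup.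
Qed.

Lemma dR_ge0 P Q : Emax P -> Emax Q -> 0 <= dR mu P Q.
Proof. by move=> hP hQ; rewrite dRE addr_ge0 // sup_cond_entropy_ge0. Qed.

Lemma dRC P Q : dR mu P Q = dR mu Q P.
Proof. by rewrite !dRE addrC. Qed.

Lemma dR_eq0 P Q : Emax P -> Emax Q ->
  dR mu P Q = 0 <-> forall n, equiv_mod0 (mu n) (P n) (Q n).
Proof.
move=> hP hQ; rewrite dRE.
have [PQ0 QP0] := (sup_cond_entropy_eq0 hP hQ, sup_cond_entropy_eq0 hQ hP).
split => [/eqP|PQ].
  by rewrite paddr_eq0 ?sup_cond_entropy_ge0 // => /andP[/eqP/PQ0 ? /eqP/QP0 ?] n.
have [PQn QPn] : (forall n, refines_mod0 (mu n) (P n) (Q n)) /\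
    (forall n, refines_mod0 (mu n) (Q n) (P n)).
  by split => n; case: (PQ n).
by rewrite (proj2 PQ0 PQn) (proj2 QP0 QPn) addr0.
Qed.

Lemma dRxx P : Emax P -> dR mu P P = 0.
Proof.
move=> hP; apply/(dR_eq0 hP hP) => n.
by split; move=> B PB; exists B; rewrite setDv measure0.
Qed.

Lemma dR_triangle P Q S : Emax P -> Emax Q -> Emax S ->
  dR mu P S <= dR mu P Q + dR mu Q S.
Proof.
move=> hP hQ hS; rewrite !dRE.
have := sup_cond_entropy_triangle hP hQ hS; have := sup_cond_entropy_triangle hS hQ hP.
lra.
Qed.

Lemma nds_entropy_fin_num P : Emax P -> nds_entropy mu f P \is a fin_num.
Proof.
move=> /[dup] hP [_ [N PN]]; have hPn := Emax_fin_partition hP.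
rewrite ge0_fin_numE ?nds_entropy_ge0 //.
apply: le_lt_trans (ltry N%:R).
have := nds_entropy_le_shift P (fun n => [set setT]) N%:R hPn
  (fun n => @trivial_fin_partition _ (X n)) (ler0n _ N).
rewrite nds_entropy_trivial adde0; apply => n.
exact: cond_entropy_le_card (hPn n) (@trivial_fin_partition _ (X n)) (PN n).
Qed.

Lemma nds_entropy_lipschitz P Q : Emax P -> Emax Q ->
  (`| nds_entropy mu f P - nds_entropy mu f Q | <= (dR mu P Q)%:E)%E.
Proof.
move=> hP hQ; rewrite dRE.
have hPQ := nds_entropy_le_shift P Q _ (Emax_fin_partition hP) (Emax_fin_partition hQ)
  (sup_cond_entropy_ge0 hP hQ) (cond_entropy_le_sup hP hQ).
have hQP := nds_entropy_le_shift Q P _ (Emax_fin_partition hQ) (Emax_fin_partition hP)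
  (sup_cond_entropy_ge0 hQ hP) (cond_entropy_le_sup hQ hP).
have s1 := sup_cond_entropy_ge0 hP hQ; have s2 := sup_cond_entropy_ge0 hQ hP.
move: hPQ hQP; rewrite -(fineK (nds_entropy_fin_num hP)) -(fineK (nds_entropy_fin_num hQ)).
rewrite -!EFinD abse_EFin !lee_fin ler_norml => ? ?.
by apply/andP; split; lra.
Qed.
End NonautonomousSystem.

Theorem mainTheorem4 (R : realType) (d : nat -> measure_display)
  (X : forall n, measurableType (d n)) (mu : forall n, probability (X n) R)
  (f : forall n, X n -> X n.+1)
  (mf : forall n, measurable_fun setT (f n))
  (push : forall n (A : set (X n.+1)), measurable A ->
     mu n.+1 A = mu n (f n @^-1` A)) :
  (forall P, Emax P -> dR mu P P = 0) /\
  (forall P Q, Emax P -> Emax Q ->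
     0 <= dR mu P Q /\ dR mu P Q = dR mu Q P /\
     (dR mu P Q = 0 <-> forall n, equiv_mod0 (mu n) (P n) (Q n))) /\
  (forall P Q S, Emax P -> Emax Q -> Emax S ->
     dR mu P S <= dR mu P Q + dR mu Q S) /\
  (forall P Q, Emax P -> Emax Q ->
     (`| nds_entropy mu f P - nds_entropy mu f Q | <= (dR mu P Q)%:E)%E).
Proof.
split; first by move=> P; exact: dRxx.
split; first by move=> P Q hP hQ; split; [exact: dR_ge0|split; [exact: dRC|exact: dR_eq0]].
split; first by move=> P Q S; exact: dR_triangle.
by move=> P Q; exact: nds_entropy_lipschitz.
Qed.
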